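(* Let $\mathcal{D}=\{(\mathbf{x}_i,y_i)\}_{i\in\mathcal{D}}$ be a finite training set with inputs $\mathcal{X}=\{\mathbf{x}_i\}_{i\in\mathcal{D}}$, let $\boldsymbol{\phi}_i=\boldsymbol{\phi}(\mathbf{x}_i)\in\mathbb{R}^P$, and consider the generalized linear model $f_{\mathbf{w}}^i=\boldsymbol{\phi}_i^\top\mathbf{w}$, $\mathbf{w}\in\mathbb{R}^P$. Let $A$ be the (strictly convex, differentiable) log-partition function of a scalar exponential family, $h=A'$, and $\ell(y,h(f))=-yf+A(f)$, with $\ell_i(\mathbf{w})=\ell(y_i,h(f_{\mathbf{w}}^i))$. Let $\mathcal{R},\mathcal{G}:\mathbb{R}^P\to\mathbb{R}$ be strictly convex differentiable regularizers, and let $$\mathbf{w}_*=\arg\min_{\mathbf{w}}\sum_{i\in\mathcal{D}}\ell_i(\mathbf{w})+\mathcal{R}(\mathbf{w}),\qquad \mathbf{w}_{\mathcal{G}}=\arg\min_{\mathbf{w}}\sum_{i\in\mathcal{D}}\ell_i(\mathbf{w})+\mathcal{G}(\mathbf{w}).$$ Let $\boldsymbol{\eta}_*=\nabla\mathcal{R}(\mathbf{w}_* )$, let $\mathcal{R}^*$ be the convex conjugate of $\mathcal{R}$, and define $$\mathcal{B}_{\mathcal{G}\mathcal{R}}(\mathbf{w}\|\mathbf{w}_* )=\mathcal{G}(\mathbf{w})+\mathcal{R}^*(\boldsymbol{\eta}_* )-\mathbf{w}^\top\boldsymbol{\eta}_*,$$ $$\mathcal{K}(\mathbf{w};\mathbf{w}_*,\mathcal{M})=\sum_{i\in\mathcal{M}}\ell\big(h(f_{\mathbf{w}_*}^i),h(f_{\mathbf{w}}^i)\big)+\mathcal{B}_{\mathcal{G}\mathcal{R}}(\mathbf{w}\|\mathbf{w}_*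 ),\qquad \hat{\mathbf{w}}_{\mathcal{G}}=\arg\min_{\mathbf{w}}\mathcal{K}(\mathbf{w};\mathbf{w}_*,\mathcal{M}),$$ where $\ell(h(f_{\mathbf{w}_*}^i),h(f_{\mathbf{w}}^i))=-h(f_{\mathbf{w}_*}^i)f_{\mathbf{w}}^i+A(f_{\mathbf{w}}^i)$. If $\mathcal{M}=\mathcal{X}$, then $\mathbf{w}_{\mathcal{G}}=\hat{\mathbf{w}}_{\mathcal{G}}$.
   Context: All minimizations are over $\mathbb{R}^P$. $\mathbf{w}_*$ is the base model trained with regularizer $\mathcal{R}$; the task is to obtain the model trained with a new regularizer $\mathcal{G}$ using only $\mathbf{w}_*$ and the memory inputs $\mathcal{M}$ (here the full input set $\mathcal{X}$), with the base model's predictions $h(f_{\mathbf{w}_*}^i)$ used in place of labels. *)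

From HB Require Import structures.
From mathcomp Require Import all_boot all_order all_algebra.
From mathcomp Require Import all_classical all_reals all_analysis.
Set Implicit Arguments. Unset Strict Implicit. Unset Printing Implicit Defensive.
Import Order.TTheory GRing.Theory Num.Theory.
Import numFieldNormedType.Exports.
Local Open Scope classical_set_scope.
Local Open Scope ring_scope.

Definition dot (R : realType) (P : nat) (u v : 'rV[R]_P) : R := (u *m v^T) 0 0.

Definition strictly_convex (R : realType) (V : lmodType R) (f : V -> R) : Prop :=
  forall (x y : V) (t : R), x != y -> 0 < t -> t < 1 ->
    f (t *: x + (1 - t) *: y) < t * f x + (1 - t) * f y.

Definition is_argmin (T : Type) (R : realType) (F : T -> R) (w : T) : Prop :=
  forall v, F w <= F v.

Definition grad (R : realType) (P : nat) (F : 'rV[R]_P -> R) (w : 'rV[R]_P)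
  : 'rV[R]_P := \row_j ('D_(delta_mx 0 j) F w).

Definition conj_fun (R : realType) (P : nat) (F : 'rV[R]_P -> R) (eta : 'rV[R]_P)
  : R := sup (range (fun w => dot w eta - F w)).

Definition glm_loss (R : realType) (A : R -> R) (y f : R) : R := - y * f + A f.

Definition meanf (R : realType) (A : R -> R) : R -> R := fun f => derive1 A f.

Definition breg_GR (R : realType) (P : nat) (G Rg : 'rV[R]_P -> R)
  (wstar w : 'rV[R]_P) : R :=
  G w + conj_fun Rg (grad Rg wstar) - dot w (grad Rg wstar).

Definition Kobj (R : realType) (P : nat) (A : R -> R) (G Rg : 'rV[R]_P -> R)
  (I : finType) (M : {pred I}) (phi : I -> 'rV[R]_P) (wstar w : 'rV[R]_P) : R :=
  \sum_(i in M) glm_loss A (meanf A (dot (phi i) wstar)) (dot (phi i) w)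
  + breg_GR G Rg wstar w.

From HB Require Import structures.
From mathcomp Require Import all_boot all_order all_algebra.
From mathcomp Require Import all_classical all_reals all_analysis.
From mathcomp Require Import ring lra.
Import Order.TTheory GRing.Theory Num.Theory.
Import numFieldNormedType.Exports.
Set Implicit Arguments. Unset Strict Implicit.
Local Open Scope ring_scope.

(* Since w_* minimizes sum_i l_i + R, the first-order condition gives
   eta_* = grad R (w_* ) = sum_i (y_i - h(f^i_{w_*})) phi_i.  Hence the linear
   term -w^T eta_* of the Bregman-type divergence turns every pseudo-label
   h(f^i_{w_*}) of K back into the true label y_i, so that
   K(w) = sum_i l_i(w) + G(w) + R^*(eta_* ): up to a constant, K is the
   objective defining w_G.  That objective is strictly convex (l_i is convex
   because A is, and G is strictly convex), so both minimizers coincide.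
   The value of R^*(eta_* ) never matters. *)

Section DirectionalDerivative.
Variables (R : realType) (V : normedModType R).
Implicit Types (F : V -> R) (w v : V) (t : R).

Let line_quotientE F w v t :
  (fun h : R => h^-1 *: ((F \o shift (t *: v + w)) (h *: v) - F (t *: v + w))) =
  (fun h : R => h^-1 *: (((fun s : R => F (s *: v + w)) \o shift t) (h *: 1)
                        - F (t *: v + w))).
Proof. by apply/funext => h /=; rewrite [h *: 1]mulr1 scalerDl addrA. Qed.

Lemma derive_along_line F w v t :
  'D_v F (t *: v + w) = 'D_1 (fun s : R => F (s *: v + w)) t.
Proof. by rewrite /derive line_quotientE. Qed.

Lemma derivable_along_line F w v t :
  derivable F (t *: v + w) v <-> derivable (fun s : R => F (s *: v + w)) t 1.
Proof. by rewrite /derivable line_quotientE. Qed.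

Lemma is_derive_along_line F w v (d : R) :
  is_derive (0 : R) (1 : R) (fun s : R => F (s *: v + w)) d -> is_derive w v F d.
Proof.
have lineE : 0 *: v + w = w by rewrite scale0r add0r.
move=> dline; apply: DeriveDef.
  by rewrite -lineE; apply/derivable_along_line; exact: ex_derive.
by rewrite -[in LHS]lineE derive_along_line derive_val.
Qed.

Lemma derive_argmin_eq0 F w v :
  (forall u, derivable F u v) -> is_argmin F w -> 'D_v F w = 0.
Proof.
move=> dF Fmin; have lineE : 0 *: v + w = w by rewrite scale0r add0r.
rewrite -lineE derive_along_line; apply: derive_val.
apply: (@derive1_at_min _ _ (-1) 1); rewrite ?in_itv /= ?ltr01 ?ltrN10 ?lerN10 //.
- by move=> t _; apply/derivable_along_line.
- by move=> t _; rewrite lineE.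
Qed.

End DirectionalDerivative.

Definition convex_fun (R : realType) (V : lmodType R) (f : V -> R) : Prop :=
  forall (x y : V) (t : R), 0 < t -> t < 1 ->
    f (t *: x + (1 - t) *: y) <= t * f x + (1 - t) * f y.

Section Convexity.
Variables (R : realType) (V : lmodType R).
Implicit Types (f g : V -> R).

Lemma strictly_convex_convex_fun f : strictly_convex f -> convex_fun f.
Proof.
move=> fsc x y t t0 t1; have [<-|xy] := eqVneq x y; last exact/ltW/fsc.
by rewrite -scalerDl -mulrDl subrKC scale1r mul1r.
Qed.

Lemma convex_fun_sum (I : finType) (F : I -> V -> R) :
  (forall i, convex_fun (F i)) -> convex_fun (fun x => \sum_i F i x).
Proof.
move=> Fcvx x y t t0 t1; rewrite !mulr_sumr -big_split /=.
by apply: ler_sum => i _; exact: Fcvx.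
Qed.

Lemma strictly_convexD f g :
  convex_fun f -> strictly_convex g -> strictly_convex (fun x => f x + g x).
Proof.
move=> fcvx gsc x y t xy t0 t1; rewrite !mulrDr addrACA.
exact: ler_ltD (fcvx _ _ _ t0 t1) (gsc _ _ _ xy t0 t1).
Qed.

Lemma strictly_convex_argmin_unique f a b :
  strictly_convex f -> is_argmin f a -> is_argmin f b -> a = b.
Proof.
move=> fsc amin bmin; have [//|ab] := eqVneq a b; exfalso.
have half_gt0 : 0 < 2^-1 :> R by rewrite invr_gt0.
have half_lt1 : 2^-1 < 1 :> R by rewrite invf_lt1 // ltr1n.
have := fsc a b _ ab half_gt0 half_lt1.
have := amin (2^-1 *: a + (1 - 2^-1) *: b); have := bmin a; lra.
Qed.

End Convexity.

Lemma is_argmin_addr (T : Type) (R : realType) (F : T -> R) (c : R) w :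
  is_argmin (fun v => F v + c) w -> is_argmin F w.
Proof. by move=> Fmin v; rewrite -(lerD2r c); exact: Fmin. Qed.

Section DotProduct.
Variables (R : realType) (P : nat).
Implicit Types (u v w : 'rV[R]_P).

Lemma dotC u v : dot u v = dot v u.
Proof. by rewrite /dot -[u *m v^T]trmxK trmx_mul trmxK mxE. Qed.

Lemma dotDr u v w : dot u (v + w) = dot u v + dot u w.
Proof. by rewrite /dot linearD mulmxDr mxE. Qed.

Lemma dotZr u v (a : R) : dot u (a *: v) = a * dot u v.
Proof. by rewrite /dot linearZ -scalemxAr mxE. Qed.

Lemma dot_sumr (I : finType) u (c : I -> R) (p : I -> 'rV[R]_P) :
  dot u (\sum_i c i *: p i) = \sum_i c i * dot u (p i).
Proof.
rewrite /dot linear_sum mulmx_sumr summxE; apply: eq_bigr => i _.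
by rewrite linearZ -scalemxAr mxE.
Qed.

Lemma dot_delta u j : dot u (delta_mx 0 j) = u 0 j.
Proof. by rewrite /dot trmx_delta -colE mxE. Qed.

Lemma convex_fun_dot (g : R -> R) u :
  convex_fun g -> convex_fun (fun w : 'rV[R]_P => g (dot u w)).
Proof. by move=> gcvx x y t t0 t1; rewrite dotDr !dotZr; exact: gcvx. Qed.

End DotProduct.

Section GLMLoss.
Variables (R : realType) (A : R -> R).
Hypothesis A_diff : forall t : R, differentiable A t.

Lemma glm_loss_convex (y : R) : strictly_convex A -> convex_fun (glm_loss A y).
Proof.
move=> Asc f g t t0 t1; have Acvx := strictly_convex_convex_fun Asc.
rewrite /glm_loss !mulrDr addrACA lerD ?Acvx //.
by rewrite /GRing.scale /= !mulrA [t * - y]mulrC [(1 - t) * - y]mulrC.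
Qed.

Lemma is_derive_glm_loss (y a b : R) :
  is_derive (0 : R) (1 : R) (fun s : R => glm_loss A y (s * b + a))
    ((meanf A a - y) * b).
Proof.
pose affine := fun s : R => s * b + a.
have affine_derive : is_derive (0 : R) (1 : R) affine b.
  by apply: is_derive_eq; rewrite scaler0 add0r addr0 [b%:A]mulr1.
have Acomp_derivable : derivable (A \o affine) 0 1.
  by apply/derivable1_diffP; apply: differentiable_comp.
have Acomp_derive : is_derive (0 : R) (1 : R) (A \o affine) (meanf A a * b).
  apply: DeriveDef => //.
  rewrite -derive1E derive1_comp; last exact: diff_derivable.
    by rewrite [derive1 affine 0]derive1E derive_val /affine /meanf mul0r add0r.
  exact: ex_derive.
by apply: is_derive_eq; rewrite mulrBl addrC [_ *: _]mulNr.
Qed.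

End GLMLoss.

Section GLMRisk.
Variables (R : realType) (P n : nat) (A : R -> R).
Variables (y : 'I_n -> R) (ph : 'I_n -> 'rV[R]_P).

Definition glm_risk (w : 'rV[R]_P) : R :=
  \sum_(i < n) glm_loss A (y i) (dot (ph i) w).

Lemma glm_risk_convex : strictly_convex A -> convex_fun glm_risk.
Proof.
move=> Asc; apply: convex_fun_sum => i.
exact/convex_fun_dot/glm_loss_convex.
Qed.

Hypothesis A_diff : forall t : R, differentiable A t.

Lemma is_derive_glm_risk w v :
  is_derive w v glm_risk
    (\sum_(i < n) (meanf A (dot (ph i) w) - y i) * dot (ph i) v).
Proof.
apply: is_derive_along_line.
have lineE : (fun s : R => glm_risk (s *: v + w)) =
    \sum_(i < n) (fun s => glm_loss A (y i) (s * dot (ph i) v + dot (ph i) w)).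
  by apply/funext => s; rewrite fct_sumE; apply: eq_bigr => i _; rewrite dotDr dotZr.
rewrite lineE; apply: is_derive_sum => i; exact: is_derive_glm_loss.
Qed.

Lemma grad_at_argmin (Rg : 'rV[R]_P -> R) wstar :
  (forall w, differentiable Rg w) ->
  is_argmin (fun w => glm_risk w + Rg w) wstar ->
  grad Rg wstar = \sum_(i < n) (y i - meanf A (dot (ph i) wstar)) *: ph i.
Proof.
move=> Rg_diff wmin; apply/rowP => j; rewrite !mxE summxE.
pose e : 'rV[R]_P := delta_mx 0 j.
have risk_derivable u : derivable glm_risk u e by case: (is_derive_glm_risk u e).
have : 'D_e (glm_risk + Rg) wstar = 0.
  by apply: derive_argmin_eq0 => // u; apply: derivableD; last exact: diff_derivable.
have risk_derive := is_derive_glm_risk wstar e.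
rewrite deriveD ?derive_val //; last exact: diff_derivable.
move=> /eqP; rewrite addrC addr_eq0 => /eqP ->; rewrite -sumrN.
by apply: eq_bigr => i _; rewrite dot_delta !mxE -mulNr opprB.
Qed.

Lemma Kobj_full_memory (G Rg : 'rV[R]_P -> R) wstar w :
  grad Rg wstar = \sum_(i < n) (y i - meanf A (dot (ph i) wstar)) *: ph i ->
  Kobj A G Rg predT ph wstar w = glm_risk w + G w + conj_fun Rg (grad Rg wstar).
Proof.
move=> moment; rewrite /Kobj /breg_GR [X in dot w X]moment dot_sumr.
have -> : \sum_(i in predT) glm_loss A (meanf A (dot (ph i) wstar)) (dot (ph i) w) =
    glm_risk w + \sum_i (y i - meanf A (dot (ph i) wstar)) * dot w (ph i).
  rewrite (eq_bigl xpredT) // -big_split; apply: eq_bigr => i _ /=.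
  by rewrite /glm_loss [dot w _]dotC; ring.
ring.
Qed.

End GLMRisk.

Theorem theorem2 (R : realType) (P n : nat) (X : Type)
  (x : 'I_n -> X) (y : 'I_n -> R) (phi : X -> 'rV[R]_P)
  (A : R -> R) (Rg G : 'rV[R]_P -> R) (wstar wG whatG : 'rV[R]_P) :
  strictly_convex A -> (forall t : R, differentiable A t) ->
  strictly_convex Rg -> (forall w, differentiable Rg w) ->
  strictly_convex G -> (forall w, differentiable G w) ->
  is_argmin (fun w => \sum_(i < n) glm_loss A (y i) (dot (phi (x i)) w) + Rg w) wstar ->
  is_argmin (fun w => \sum_(i < n) glm_loss A (y i) (dot (phi (x i)) w) + G w) wG ->
  (* memory M = X, the full input set: all training indices *)
  is_argmin (Kobj A G Rg (@predT 'I_n) (fun i => phi (x i)) wstar) whatG ->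
  wG = whatG.
Proof.
move=> A_sc A_diff _ Rg_diff G_sc _ wstar_min wG_min whatG_min.
pose ph i := phi (x i).
have moment := grad_at_argmin A_diff Rg_diff wstar_min.
have risk_G_sc : strictly_convex (fun w => glm_risk A y ph w + G w).
  exact: strictly_convexD (glm_risk_convex y ph A_sc) G_sc.
apply: (strictly_convex_argmin_unique risk_G_sc wG_min).
apply: (@is_argmin_addr _ _ _ (conj_fun Rg (grad Rg wstar))) => v.
by rewrite -!(Kobj_full_memory G _ moment); exact: whatG_min.
Qed.
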